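(* In the setting $|H|=1$ of the context (with Assumption 1), the convex relaxation (R1) is exact (its optimal value equals $c^\star$) if the following convex set of $(\boldsymbol{\mu},{\bf x},w_1)\in\mathbb{R}^m\times\mathbb{R}^n\times\mathbb{R}$ is empty: $d_1^*+\sum_{i\in M}\xi_i\mu_i=0$; $c_1+\sum_{i\in M}a_{i1}\mu_i=0$; $(D_{jj}-d_1^* )x_j+c_j+\sum_{i\in M}a_{ij}\mu_i=0$ for $j\in N\setminus\{1\}$; $\xi_iw_1+2\sum_{j\in N}a_{ij}x_j\le b_i$ for $i\in M$; $\sum_{j\in N}x_j^2\le w_1$; $\mu_i\ge 0$ for $i\in M$.
   Context: Let $N=\{1,\dots,n\}$, $M=\{1,\dots,m\}$. Data: reals $D_{jj}$ ($j\in N$), $c_j$, $a_{ij}$, $b_i$, $\xi_i$ ($i\in M$, $j\in N$). The diagonal QCQP (P) is $c^\star=\inf\{\sum_{j}D_{jj}x_j^2+2\sum_jc_jx_j : \xi_i\sum_jx_j^2+2\sum_ja_{ij}x_j\le b_i,\ i\in M\}$, i.e. all constraint Hessians are ${\bf A}^i=\xi_i{\bf I}$. Its Shor relaxation is $v^\star=\inf\{{\bf D}\bullet{\bf X}+2{\bf c}^\top{\bf x} : \xi_i\,\mathrm{trace}({\bf X})+2{\bf a}_i^\top{\bf x}\le b_i\ (i\in M),\ {\bf X}-{\bf x}{\bf x}^\top\succeq{\bf O}\}$ with ${\bf D}=\mathrm{diag}(D_{jj})$. Assumption 1: (P) is feasible; some $\bar{\bf y}\ge0$ has $\sum_i\bar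 y_i\xi_i>0$; the Shor relaxation has a feasible point in the interior of its feasible region. It is assumed that $d_1^*=\min_{j\in N}D_{jj}$ is attained uniquely at $j=1$. The convex relaxation (R1) is: $\min\ d_1^*w_1+\sum_{j\in N}(D_{jj}-d_1^* )x_j^2+2\sum_{j\in N}c_jx_j$ s.t. $\xi_iw_1+2\sum_{j\in N}a_{ij}x_j\le b_i$ ($i\in M$), $\sum_{j\in N}x_j^2\le w_1$; its optimal value equals $v^\star$. *)

From HB Require Import structures.
From mathcomp Require Import all_boot all_order all_algebra.
From mathcomp Require Import boolp classical_sets reals constructive_ereal ereal.
Set Implicit Arguments. Unset Strict Implicit. Unset Printing Implicit Defensive.
Import Order.TTheory GRing.Theory Num.Theory.
Local Open Scope ring_scope.
Local Open Scope classical_set_scope.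

(* Index j = 1 of the paper is ord0 : 'I_n.+1 here (N = 'I_n.+1, M = 'I_m). *)
Section Diag.
Variables (R : realType) (n m : nat).
Variables (D c : 'I_n.+1 -> R) (a : 'I_m -> 'I_n.+1 -> R) (b xi : 'I_m -> R).

Definition posdef (A : 'M[R]_n.+1) :=
  forall v : 'cV[R]_n.+1, v != 0 -> 0 < (v^T *m A *m v) 0 0.

Definition P_obj (x : 'I_n.+1 -> R) :=
  \sum_j D j * x j ^+ 2 + 2 * \sum_j c j * x j.
Definition P_feas (x : 'I_n.+1 -> R) :=
  forall i, xi i * (\sum_j x j ^+ 2) + 2 * \sum_j a i j * x j <= b i.
Definition cstar : \bar R :=
  ereal_inf [set (P_obj x)%:E | x in P_feas].

Definition Shor_strictly_feasible :=
  exists (X : 'M[R]_n.+1) (x : 'cV[R]_n.+1),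
    X^T = X /\
    (forall i, xi i * \tr X + 2 * \sum_j a i j * x j 0 < b i) /\
    posdef (X - x *m x^T).

Definition assumption1 :=
  (exists x, P_feas x) /\
  (exists y : 'I_m -> R, (forall i, 0 <= y i) /\ 0 < \sum_i y i * xi i) /\
  Shor_strictly_feasible.

Definition d1 := D ord0.

Definition R1_obj (x : 'I_n.+1 -> R) (w1 : R) :=
  d1 * w1 + \sum_j (D j - d1) * x j ^+ 2 + 2 * \sum_j c j * x j.
Definition R1_feas (x : 'I_n.+1 -> R) (w1 : R) :=
  (forall i, xi i * w1 + 2 * \sum_j a i j * x j <= b i) /\
  \sum_j x j ^+ 2 <= w1.
Definition R1_value : \bar R :=
  ereal_inf [set (R1_obj xw.1 xw.2)%:E | xw in [set xw | R1_feas xw.1 xw.2]].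

Definition certificate_set : set ((('I_m -> R) * ('I_n.+1 -> R)) * R) :=
  [set t | let: (mu, x, w1) := t in
     d1 + \sum_i xi i * mu i = 0 /\
     c ord0 + \sum_i a i ord0 * mu i = 0 /\
     (forall j, j != ord0 -> (D j - d1) * x j + c j + \sum_i a i j * mu i = 0) /\
     R1_feas x w1 /\
     (forall i, 0 <= mu i)].
End Diag.

(* Under Assumption 1 the feasible set of (R1) is nonempty and compact: a
   nonnegative combination of the linear constraints with positive weight on
   w1 bounds w1 from above, and sum_j x_j^2 <= w1 then bounds x.  Hence (R1)
   has a minimiser (x, w1).  If its convex constraint is tight,
   sum_j x_j^2 = w1, then x is feasible for (P) with the same objective value,
   and since every feasible point of (P) lifts to a feasible point of (R1)
   with equal value, the two optimal values coincide.  If it is slack, only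
   the linear constraints restrict first-order moves, so no feasible
   direction decreases the objective; Farkas' lemma turns this into
   multipliers mu >= 0 with (mu, x, w1) in the certificate set, which is
   impossible. *)

From HB Require Import structures.
From mathcomp Require Import all_boot all_order all_algebra.
From mathcomp Require Import boolp classical_sets reals constructive_ereal ereal.
From mathcomp Require Import topology normedtype matrix_normedtype derive.
From mathcomp Require Import ring lra.

Set Implicit Arguments.
Unset Strict Implicit.
Unset Printing Implicit Defensive.

Import Order.TTheory GRing.Theory Num.Theory.
Import numFieldNormedType.Exports.
Local Open Scope ring_scope.
Local Open Scope classical_set_scope.

Section Farkas.
Variables (R : realFieldType) (I : finType).

Definition dot (u v : I -> R) := \sum_j u j * v j.

Lemma dot_subr (u v e : I -> R) (r : R) :
  dot u (fun j => v j - r * e j) = dot u v - r * dot u e.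
Proof. by rewrite /dot mulr_sumr -sumrB; apply: eq_bigr => j _; ring. Qed.

Lemma dot_subl (u v d : I -> R) (s t : R) :
  dot (fun j => s * u j - t * v j) d = s * dot u d - t * dot v d.
Proof. by rewrite /dot !mulr_sumr -sumrB; apply: eq_bigr => j _; ring. Qed.

Lemma dot_self_le0 (u : I -> R) : dot u u <= 0 -> forall j, u j = 0.
Proof.
move=> u2_le0 j; have sq_ge0 i : 0 <= u i * u i by rewrite -expr2 sqr_ge0.
have u2_eq0 : \sum_i u i * u i = 0 by apply/eqP; rewrite eq_le u2_le0 sumr_ge0.
have /eqP := @psumr_eq0P _ _ predT _ (fun i _ => sq_ge0 i) u2_eq0 j isT.
by rewrite mulf_eq0 orbb => /eqP.
Qed.

Definition in_cone k (a : 'I_k -> I -> R) (c : I -> R) :=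
  exists2 mu : 'I_k -> R, forall i, 0 <= mu i & forall j, c j = \sum_i mu i * a i j.

Definition farkas_hyp k (a : 'I_k -> I -> R) (c : I -> R) :=
  forall d, (forall i, dot (a i) d <= 0) -> dot c d <= 0.

(* Fourier-Motzkin elimination of the generator [a ord0] along a direction [d]
   with [a ord0 . d > 0]: the remaining generators and the target are
   projected, parallel to [a ord0], onto the hyperplane orthogonal to [d]
   (scaled by [a ord0 . d]). *)
Section Elimination.
Variables (k : nat) (a : 'I_k.+1 -> I -> R) (c d : I -> R).
Let a0 := a ord0.
Let al := dot a0 d.
Hypothesis al_gt0 : 0 < al.

Definition elim_gen (i : 'I_k) (j : I) :=
  al * a (lift ord0 i) j - dot (a (lift ord0 i)) d * a0 j.
Definition elim_target (j : I) := al * c j - dot c d * a0 j.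

(* Farkas' hypothesis survives the elimination: test [c] against the
   direction [d' - r d], which is orthogonal to [a0]. *)
Lemma farkas_hyp_elim : farkas_hyp a c -> farkas_hyp elim_gen elim_target.
Proof.
move=> hyp d' elim_le0; pose r := dot a0 d' / al.
have al_neq0 : al != 0 by rewrite gt_eqF.
have shift (u : I -> R) : dot u d' - r * dot u d = (al * dot u d' - dot u d * dot a0 d') / al.
  by rewrite /r; field.
have c_le0 : dot c (fun j => d' j - r * d j) <= 0.
  apply: hyp => i; rewrite dot_subr.
  case: (unliftP ord0 i) => [i'|] ->.
    by rewrite shift -dot_subl pmulr_lle0 ?invr_gt0 // elim_le0.
  by rewrite shift -/a0 -/al subrr mul0r.
by move: c_le0; rewrite dot_subr shift pmulr_lle0 ?invr_gt0 // /elim_target dot_subl.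
Qed.

Lemma in_cone_unelim :
  (forall i, dot (a (lift ord0 i)) d <= 0) -> 0 < dot c d ->
  in_cone elim_gen elim_target -> in_cone a c.
Proof.
move=> rest_le0 cd_gt0 [mu mu_ge0 mu_c].
pose S := \sum_i mu i * dot (a (lift ord0 i)) d.
have al_neq0 : al != 0 by rewrite gt_eqF.
exists (fun i => if unlift ord0 i is Some i' then mu i' else (dot c d - S) / al).
  move=> i; case: (unlift ord0 i) => [i'|] //; apply: divr_ge0; last exact: ltW.
  rewrite subr_ge0 (le_trans _ (ltW cd_gt0)) // sumr_le0 // => i' _.
  exact: mulr_ge0_le0.
move=> j; rewrite big_ord_recl unlift_none.
under eq_bigr do rewrite liftK.
apply: (mulfI al_neq0); rewrite mulrDr mulrA [al * (_ / _)]mulrC divfK //.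
have := mu_c j; rewrite /elim_target /elim_gen.
have -> : \sum_i mu i * (al * a (lift ord0 i) j - dot (a (lift ord0 i)) d * a0 j) =
          al * \sum_i mu i * a (lift ord0 i) j - S * a0 j.
  by rewrite mulr_sumr mulr_suml -sumrB; apply: eq_bigr => i _; ring.
rewrite /a0; lra.
Qed.
End Elimination.

Lemma farkas k (a : 'I_k -> I -> R) (c : I -> R) : farkas_hyp a c -> in_cone a c.
Proof.
elim: k a c => [|k IH] a c hyp.
  exists (fun _ => 0) => // j; rewrite big_ord0.
  by apply: dot_self_le0; apply: hyp => -[].
have [[d [rest_le0 cd_gt0]]|no_sep] :=
  pselect (exists d, (forall i, dot (a (lift ord0 i)) d <= 0) /\ 0 < dot c d).
  have al_gt0 : 0 < dot (a ord0) d.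
    rewrite ltNge; apply/negP => a0d_le0; move: cd_gt0; rewrite ltNge hyp //.
    by move=> i; case: (unliftP ord0 i) => [i'|] ->.
  apply: (in_cone_unelim al_gt0 rest_le0 cd_gt0).
  exact/IH/farkas_hyp_elim.
have [mu mu_ge0 mu_c] : in_cone (fun i => a (lift ord0 i)) c.
  apply: IH => d rest_le0; rewrite leNgt; apply/negP => cd_gt0.
  by apply: no_sep; exists d.
exists (fun i => if unlift ord0 i is Some i' then mu i' else 0).
  by move=> i; case: (unlift ord0 i).
move=> j; rewrite big_ord_recl unlift_none mul0r add0r mu_c.
by apply: eq_bigr => i _; rewrite liftK.
Qed.
End Farkas.

(* Continuity of real functions on a topological space, stated for the
   eta-expanded functions that occur in the objective and constraints. *)
Section ContinuityFacts.
Variables (T : topologicalType) (R : realType).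

Lemma continuous_add (f g : T -> R) :
  continuous f -> continuous g -> continuous (fun v => f v + g v).
Proof. by move=> cf cg v; exact: continuousD (cf v) (cg v). Qed.

Lemma continuous_mul (f g : T -> R) :
  continuous f -> continuous g -> continuous (fun v => f v * g v).
Proof. by move=> cf cg v; exact: continuousM (cf v) (cg v). Qed.

Lemma continuous_scale (r : R) (f : T -> R) :
  continuous f -> continuous (fun v => r * f v).
Proof. by move=> cf; apply: continuous_mul => // v; exact: cst_continuous. Qed.

Lemma continuous_sum (J : finType) (F : J -> T -> R) :
  (forall j, continuous (F j)) -> continuous (fun v => \sum_j F j v).
Proof. by move=> cF; apply: continuous_big => //; exact: add_continuous. Qed.

Lemma closed_le_continuous (f g : T -> R) :
  continuous f -> continuous g -> closed [set v | f v <= g v].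
Proof.
move=> cf cg.
have -> : [set v | f v <= g v] = (fun v => g v - f v) @^-1` [set r | 0 <= r].
  by apply/seteqP; split => v /=; rewrite subr_ge0.
apply: preimage_closed; last exact: closed_ge.
by move=> v _; exact: continuousB (cg v) (cf v).
Qed.
End ContinuityFacts.

Lemma cross_term_le (R : realFieldType) (s al x : R) :
  0 < s -> - (2 * al * x) <= s / 2 * x ^+ 2 + 2 * al ^+ 2 / s.
Proof.
move=> s_gt0; rewrite -subr_ge0.
have -> : s / 2 * x ^+ 2 + 2 * al ^+ 2 / s - - (2 * al * x) = s / 2 * (x + 2 * al / s) ^+ 2.
  by field; rewrite gt_eqF.
by rewrite mulr_ge0 ?sqr_ge0 ?divr_ge0 ?ltW.
Qed.

Section Encoding.
Variables (R : realType) (n : nat).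

(* The affine-in-(x, w1) expression [al w1 + 2 sum_j be_j x_j]; the linear
   constraints of (R1) and the first-order variation of its objective have
   this shape. *)
Definition affine_form (al : R) (be x : 'I_n.+1 -> R) (w : R) :=
  al * w + 2 * \sum_j be j * x j.

(* A pair (x, w1) is encoded as a vector indexed by 'I_n.+2, with w1 at index 0. *)
Definition vec (x : 'I_n.+1 -> R) (w : R) (k : 'I_n.+2) := oapp x w (unlift ord0 k).

Lemma vec_ord0 x w : vec x w ord0 = w.
Proof. by rewrite /vec unlift_none. Qed.

Lemma vec_lift x w j : vec x w (lift ord0 j) = x j.
Proof. by rewrite /vec liftK. Qed.

Lemma dot_vec (al : R) (be : 'I_n.+1 -> R) (d : 'I_n.+2 -> R) :
  dot (vec (fun j => 2 * be j) al) d = affine_form al be (fun j => d (lift ord0 j)) (d ord0).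
Proof.
rewrite /dot big_ord_recl vec_ord0 /affine_form mulr_sumr; congr (_ + _).
by apply: eq_bigr => j _; rewrite vec_lift mulrA.
Qed.

(* The same encoding on row vectors, which carry the product topology. *)
Local Notation V := 'rV[R]_n.+2.
Definition xof (v : V) (j : 'I_n.+1) := v ord0 (lift ord0 j).
Definition wof (v : V) := v ord0 ord0.

Lemma xof_vec x w : xof (\row_k vec x w k) = x.
Proof. by apply: funext => j; rewrite /xof mxE vec_lift. Qed.

Lemma wof_vec x w : wof (\row_k vec x w k) = w.
Proof. by rewrite /wof mxE vec_ord0. Qed.

Lemma continuous_xof j : continuous (fun v : V => xof v j).
Proof. exact: coord_continuous. Qed.

Lemma continuous_wof : continuous wof.
Proof. exact: coord_continuous. Qed.

Lemma continuous_affine_form al be :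
  continuous (fun v => affine_form al be (xof v) (wof v)).
Proof.
apply: continuous_add; first by apply: continuous_scale; exact: continuous_wof.
apply: continuous_scale; apply: continuous_sum => j.
by apply: continuous_scale; exact: continuous_xof.
Qed.

Lemma continuous_sumsq : continuous (fun v => \sum_j xof v j ^+ 2).
Proof. by apply: continuous_sum => j; apply: continuous_mul; exact: continuous_xof. Qed.

End Encoding.

Section R1Minimiser.
Variables (R : realType) (n m : nat).
Variables (D c : 'I_n.+1 -> R) (a : 'I_m -> 'I_n.+1 -> R) (b xi : 'I_m -> R).
Local Notation V := 'rV[R]_n.+2.

Lemma continuous_R1_obj : continuous (fun v => R1_obj D c (xof v) (wof v)).
Proof.
apply: continuous_add; last first.
  apply: continuous_scale; apply: continuous_sum => j.
  by apply: continuous_scale; exact: continuous_xof.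
apply: continuous_add; first by apply: continuous_scale; exact: continuous_wof.
apply: continuous_sum => j; apply: continuous_scale.
by apply: continuous_mul; exact: continuous_xof.
Qed.

Lemma closed_R1_feas : closed [set v : V | R1_feas a b xi (xof v) (wof v)].
Proof.
have -> : [set v : V | R1_feas a b xi (xof v) (wof v)] =
    \bigcap_(i in [set: 'I_m])
       [set v | affine_form (xi i) (a i) (xof v) (wof v) <= b i]
    `&` [set v | \sum_j xof v j ^+ 2 <= wof v].
  apply/seteqP; split => v [lin quad]; split => // i; last exact: lin.
  by move=> _; exact: lin.
apply: closedI.
  apply: closed_bigI => i _; apply: closed_le_continuous; first exact: continuous_affine_form.
  by move=> v; exact: cst_continuous.
by apply: closed_le_continuous; [exact: continuous_sumsq | exact: continuous_wof].
Qed.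

Lemma R1_feas_w_bounded (y : 'I_m -> R) :
  (forall i, 0 <= y i) -> 0 < \sum_i y i * xi i ->
  exists W, forall x w, R1_feas a b xi x w -> w <= W.
Proof.
move=> y_ge0; set s := \sum_i _ => s_gt0.
pose al j := \sum_i y i * a i j.
pose K := \sum_j 2 * al j ^+ 2 / s.
exists (2 * (\sum_i y i * b i + K) / s) => x w [lin quad].
have comb : s * w + 2 * \sum_j al j * x j <= \sum_i y i * b i.
  have -> : s * w + 2 * \sum_j al j * x j =
      \sum_i y i * (xi i * w + 2 * \sum_j a i j * x j).
    rewrite (eq_bigr (fun i => y i * xi i * w + 2 * \sum_j y i * (a i j * x j))); last first.
      by move=> i _; rewrite -mulr_sumr; ring.
    rewrite big_split /= -mulr_suml -mulr_sumr exchange_big /=; congr (_ + 2 * _).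
    by apply: eq_bigr => j _; rewrite /al mulr_suml; apply: eq_bigr => i _; ring.
  by apply: ler_sum => i _; exact: ler_wpM2l.
have cross : - (2 * \sum_j al j * x j) <= s / 2 * \sum_j x j ^+ 2 + K.
  rewrite mulr_sumr -sumrN mulr_sumr -big_split /=; apply: ler_sum => j _.
  by rewrite mulrA; exact: cross_term_le.
have quad' : s / 2 * \sum_j x j ^+ 2 <= s / 2 * w.
  by apply: ler_wpM2l => //; rewrite divr_ge0 // ltW.
rewrite ler_pdivlMr //; have : s / 2 * w = s * w / 2 by ring.
lra.
Qed.

Definition R1_opt x w :=
  R1_feas a b xi x w /\
  forall x' w', R1_feas a b xi x' w' -> R1_obj D c x w <= R1_obj D c x' w'.

(* Under Assumption 1 the feasible set of (R1) is nonempty and compact, so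
   the continuous objective attains its minimum. *)
Lemma R1_has_opt (y : 'I_m -> R) :
  (exists x, P_feas a b xi x) ->
  (forall i, 0 <= y i) -> 0 < \sum_i y i * xi i ->
  exists x w, R1_opt x w.
Proof.
move=> [x0 x0_feas] y_ge0 y_pos.
have [W w_le] := R1_feas_w_bounded y_ge0 y_pos.
pose A := [set v : V | R1_feas a b xi (xof v) (wof v)].
have A_neq0 : A !=set0.
  by exists (\row_k vec x0 (\sum_j x0 j ^+ 2) k); rewrite /A /= xof_vec wof_vec.
have A_compact : compact A.
  apply: (subclosed_compact closed_R1_feas
    (rV_compact (fun=> @segment_compact _ (- (W + 1)) (W + 1)))).
  move=> v [lin quad] k /=; have w_W := w_le _ _ (conj lin quad).
  have sumsq_ge0 : 0 <= \sum_j xof v j ^+ 2 by rewrite sumr_ge0 // => j _; exact: sqr_ge0.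
  rewrite in_itv /=; case: (unliftP ord0 k) => [j|] ->; last by rewrite -/(wof v); lra.
  have : xof v j ^+ 2 <= \sum_j xof v j ^+ 2.
    by rewrite (bigD1 j) //= lerDl sumr_ge0 // => i _; exact: sqr_ge0.
  rewrite /xof => xj_le; apply/andP; split; nra.
have [v /set_mem v_feas v_min] :=
  compact_EVT_min A_neq0 A_compact (continuous_subspaceT continuous_R1_obj).
exists (xof v), (wof v); split => // x' w' feas'.
have := v_min (\row_k vec x' w' k); rewrite xof_vec wof_vec; apply.
by apply/mem_set; rewrite /A /= xof_vec wof_vec.
Qed.
End R1Minimiser.

Lemma small_step (R : realFieldType) (de ep E Q : R) :
  0 < de -> 0 < ep -> 0 <= E -> 0 <= Q ->
  exists t, [/\ 0 < t, t <= 1, t * E <= de & t * Q < ep].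
Proof.
move=> de_gt0 ep_gt0 E_ge0 Q_ge0.
pose den := de * ep + E * ep + Q * de.
have deep_gt0 : 0 < de * ep by exact: mulr_gt0.
have den_gt0 : 0 < den.
  by rewrite /den -addrA ltr_pwDl // addr_ge0 // mulr_ge0 // ltW.
have Eep_ge0 : 0 <= E * ep by rewrite mulr_ge0 // ltW.
have Qde_ge0 : 0 <= Q * de by rewrite mulr_ge0 // ltW.
exists (de * ep / den); split.
- exact: divr_gt0.
- by rewrite ler_pdivrMr // mul1r /den; lra.
- rewrite mulrAC ler_pdivrMr // /den.
  have := mulr_ge0 (mulr_ge0 (ltW de_gt0) Q_ge0) (ltW de_gt0); nra.
- rewrite mulrAC ltr_pdivrMr // /den.
  have := mulr_ge0 (mulr_ge0 E_ge0 (ltW ep_gt0)) (ltW ep_gt0); nra.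
Qed.

Lemma sum_sq_along (R : comNzRingType) (I : finType) (x d : I -> R) (t : R) :
  \sum_j (x j + t * d j) ^+ 2 =
  \sum_j x j ^+ 2 + t * (2 * \sum_j x j * d j) + t ^+ 2 * \sum_j d j ^+ 2.
Proof. by rewrite !mulr_sumr -!big_split /=; apply: eq_bigr => j _; ring. Qed.

Section R1FirstOrder.
Variables (R : realType) (n m : nat).
Variables (D c : 'I_n.+1 -> R) (a : 'I_m -> 'I_n.+1 -> R) (b xi : 'I_m -> R).

Lemma affine_form_along (al : R) (be x dx : 'I_n.+1 -> R) (w dw t : R) :
  affine_form al be (fun j => x j + t * dx j) (w + t * dw) =
  affine_form al be x w + t * affine_form al be dx dw.
Proof.
rewrite /affine_form.
have -> : \sum_j be j * (x j + t * dx j) = \sum_j be j * x j + t * \sum_j be j * dx j.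
  by rewrite mulr_sumr -big_split /=; apply: eq_bigr => j _; ring.
ring.
Qed.

(* The directional derivative of the objective of (R1) at [x] along [(dx, dw)]. *)
Definition R1_slope (x dx : 'I_n.+1 -> R) (dw : R) :=
  affine_form (d1 D) (fun j => (D j - d1 D) * x j + c j) dx dw.

Lemma R1_obj_along (x dx : 'I_n.+1 -> R) (w dw t : R) :
  R1_obj D c (fun j => x j + t * dx j) (w + t * dw) =
  R1_obj D c x w + t * R1_slope x dx dw + t ^+ 2 * \sum_j (D j - d1 D) * dx j ^+ 2.
Proof.
rewrite /R1_obj /R1_slope /affine_form.
have -> : \sum_j (D j - d1 D) * (x j + t * dx j) ^+ 2 =
    \sum_j (D j - d1 D) * x j ^+ 2 + 2 * t * \sum_j (D j - d1 D) * x j * dx j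
    + t ^+ 2 * \sum_j (D j - d1 D) * dx j ^+ 2.
  by rewrite !mulr_sumr -!big_split /=; apply: eq_bigr => j _; ring.
have -> : \sum_j c j * (x j + t * dx j) = \sum_j c j * x j + t * \sum_j c j * dx j.
  by rewrite mulr_sumr -big_split /=; apply: eq_bigr => j _; ring.
have -> : \sum_j ((D j - d1 D) * x j + c j) * dx j =
    \sum_j (D j - d1 D) * x j * dx j + \sum_j c j * dx j.
  by rewrite -big_split /=; apply: eq_bigr => j _; ring.
ring.
Qed.

Lemma R1_descent (x dx : 'I_n.+1 -> R) (w dw : R) :
  R1_feas a b xi x w -> \sum_j x j ^+ 2 < w ->
  (forall i, affine_form (xi i) (a i) dx dw <= 0) ->
  R1_slope x dx dw < 0 ->
  exists x' w', R1_feas a b xi x' w' /\ R1_obj D c x' w' < R1_obj D c x w.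
Proof.
move=> [lin _] slack dlin_le0 slope_lt0.
pose A1 := \sum_j x j * dx j; pose A2 := \sum_j dx j ^+ 2.
pose Q := \sum_j (D j - d1 D) * dx j ^+ 2.
have A2_ge0 : 0 <= A2 by rewrite sumr_ge0 // => j _; exact: sqr_ge0.
have room_gt0 : 0 < w - \sum_j x j ^+ 2 by rewrite subr_gt0.
have gain_gt0 : 0 < - R1_slope x dx dw by rewrite oppr_gt0.
have [t [t_gt0 t_le1 tE tQ]] := small_step room_gt0 gain_gt0
  (addr_ge0 (normr_ge0 (2 * A1 - dw)) A2_ge0) (normr_ge0 Q).
exists (fun j => x j + t * dx j), (w + t * dw); split; first split.
- move=> i; have := affine_form_along (xi i) (a i) x dx w dw t; rewrite /affine_form => ->.
  by have := lin i; have := mulr_ge0_le0 (ltW t_gt0) (dlin_le0 i); rewrite /affine_form; lra.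
- rewrite sum_sq_along -/A1 -/A2.
  have : t * (2 * A1 - dw) <= t * `|2 * A1 - dw|.
    by apply: ler_wpM2l; [exact: ltW | exact: ler_norm].
  have : t ^+ 2 * A2 <= t * A2.
    by rewrite expr2 -mulrA ler_pM2l // ler_piMl.
  lra.
- rewrite R1_obj_along -/Q.
  have : t ^+ 2 * Q <= t * (t * `|Q|) by rewrite expr2 -mulrA ler_pM2l // ler_pM2l // ler_norm.
  have : t * (t * `|Q|) < t * - R1_slope x dx dw by rewrite ltr_pM2l.
  lra.
Qed.

(* First-order optimality: at a minimiser of (R1) with slack convex
   constraint, Farkas' lemma provides multipliers placing the minimiser in the
   certificate set. *)
Lemma R1_opt_certificate (x : 'I_n.+1 -> R) (w : R) :
  R1_opt D c a b xi x w -> \sum_j x j ^+ 2 < w ->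
  exists mu, certificate_set D c a b xi (mu, x, w).
Proof.
move=> [feas opt] slack.
pose g j := (D j - d1 D) * x j + c j.
have [mu mu_ge0 mu_eq] :
    in_cone (fun i => vec (fun j => 2 * a i j) (xi i)) (vec (fun j => 2 * - g j) (- d1 D)).
  apply: farkas => d dlin_le0; rewrite leNgt; apply/negP => neg_slope_gt0.
  pose dx j := d (lift ord0 j); pose dw := d ord0.
  have slope_lt0 : R1_slope x dx dw < 0.
    move: neg_slope_gt0; rewrite dot_vec /R1_slope /affine_form /g /dx /dw.
    by under eq_bigr do rewrite mulNr; rewrite sumrN; lra.
  have dlin i : affine_form (xi i) (a i) dx dw <= 0 by rewrite -dot_vec; exact: dlin_le0.
  have [x' [w' [feas' better]]] := R1_descent feas slack dlin slope_lt0.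
  by have := opt _ _ feas'; rewrite leNgt better.
have mu_w : d1 D + \sum_i xi i * mu i = 0.
  have := mu_eq ord0; rewrite vec_ord0; under eq_bigr do rewrite vec_ord0 mulrC.
  by move=> <-; rewrite subrr.
have mu_x j : g j + \sum_i a i j * mu i = 0.
  have := mu_eq (lift ord0 j); rewrite vec_lift; under eq_bigr do rewrite vec_lift.
  have -> : \sum_i mu i * (2 * a i j) = 2 * \sum_i a i j * mu i.
    by rewrite mulr_sumr; apply: eq_bigr => i _; ring.
  lra.
exists mu; do !split => //.
- by have := mu_x ord0; rewrite /g /d1 subrr mul0r add0r.
- by move=> j _; exact: mu_x j.
Qed.
End R1FirstOrder.

Section R1RelaxesP.
Variables (R : realType) (n m : nat).
Variables (D c : 'I_n.+1 -> R) (a : 'I_m -> 'I_n.+1 -> R) (b xi : 'I_m -> R).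

Lemma R1_obj_sumsq (x : 'I_n.+1 -> R) : R1_obj D c x (\sum_j x j ^+ 2) = P_obj D c x.
Proof.
rewrite /R1_obj /P_obj mulr_sumr -big_split /=.
by congr (_ + _); apply: eq_bigr => j _; ring.
Qed.

Lemma R1_value_opt (x : 'I_n.+1 -> R) (w : R) :
  R1_opt D c a b xi x w -> R1_value D c a b xi = (R1_obj D c x w)%:E.
Proof.
move=> [feas opt]; apply/le_anti/andP; split; first by apply: ereal_inf_lbound; exists (x, w).
by apply: le_ereal_inf_tmp => _ [[x' w'] /= feas' <-]; rewrite lee_fin; exact: opt.
Qed.

(* A minimiser of (R1) on which the convex constraint is tight solves (P),
   since every feasible point of (P) lifts to one of (R1) with equal value. *)
Lemma cstar_opt_tight (x : 'I_n.+1 -> R) (w : R) :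
  R1_opt D c a b xi x w -> \sum_j x j ^+ 2 = w -> cstar D c a b xi = (R1_obj D c x w)%:E.
Proof.
move=> [[lin _] opt] tight; apply/le_anti/andP; split.
  apply: ereal_inf_lbound; exists x; last by rewrite -tight R1_obj_sumsq.
  by move=> i; rewrite tight; exact: lin.
apply: le_ereal_inf_tmp => _ [x' feas' <-]; rewrite lee_fin -R1_obj_sumsq.
by apply: opt; split.
Qed.
End R1RelaxesP.

Theorem proposition3 (R : realType) (n m : nat)
  (D c : 'I_n.+1 -> R) (a : 'I_m -> 'I_n.+1 -> R) (b xi : 'I_m -> R) :
  assumption1 a b xi ->
  (forall j : 'I_n.+1, j != ord0 -> D ord0 < D j) ->
  certificate_set D c a b xi = set0 ->
  R1_value D c a b xi = cstar D c a b xi.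
Proof.
move=> [P_nonempty [[y [y_ge0 y_pos]] _]] _ no_certificate.
have [x [w opt]] := R1_has_opt D c P_nonempty y_ge0 y_pos.
have tight : \sum_j x j ^+ 2 = w.
  apply/eqP; rewrite eq_le opt.1.2 leNgt /=; apply/negP => slack.
  have [mu] := R1_opt_certificate opt slack.
  by rewrite no_certificate.
by rewrite (R1_value_opt opt) (cstar_opt_tight opt tight).
Qed.
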